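(* Let $I\subseteq\mathbb{R}_+$ be a nonempty, non-singleton interval, let $n\in\mathbb{N}$, and let $\Phi: I\to\mathbb{R}_+$ be subadditive of order $n$. Then the function $t\mapsto \frac{\Phi(t)}{t^n}$ is subadditive on $I\cap\,]0,\infty[$, i.e. $\frac{\Phi(x+y)}{(x+y)^n}\leq\frac{\Phi(x)}{x^n}+\frac{\Phi(y)}{y^n}$ for all $x,y\in I\cap\,]0,\infty[$ with $x+y\in I$.
   Context: $\mathbb{R}_+$ denotes the set of nonnegative real numbers. For $n\in\mathbb{N}$, a function $\Phi: I\to\mathbb{R}_+$ is called subadditive of order $n$ if for all $x,y\in I$ with $y>0$ and $x+y\in I$ one has $\Phi(x+y)\leq \Phi(x)+\frac{(x+y)^n-x^n}{y^n}\Phi(y)$. *)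

From Stdlib Require Import Reals.
Open Scope R_scope.

Definition is_interval (I : R -> Prop) : Prop :=
  forall x y z, I x -> I z -> x <= y <= z -> I y.

Definition subadditive_of_order (I : R -> Prop) (n : nat) (Phi : R -> R) : Prop :=
  forall x y, I x -> I y -> 0 < y -> I (x + y) ->
    Phi (x + y) <= Phi x + ((x + y) ^ n - x ^ n) / y ^ n * Phi y.

(* Dividing the order-n subadditivity inequality by (x+y)^n gives
   Phi(x+y)/(x+y)^n <= Phi(x)/(x+y)^n + Phi(y)/y^n - x^n Phi(y)/(y^n (x+y)^n);
   the last term is nonnegative and x^n <= (x+y)^n, so the right-hand side is
   at most Phi(x)/x^n + Phi(y)/y^n.  Only the positivity of x, y and of
   Phi(x), Phi(y) is used. *)

From Stdlib Require Import Reals Lra.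
Open Scope R_scope.

Lemma weighted_bound_div_le (F P Q a b s : R) :
  0 <= P -> 0 <= Q -> 0 < a -> a <= s -> 0 < b ->
  F <= P + (s - a) / b * Q -> F / s <= P / a + Q / b.
Proof.
  intros HP HQ Ha Has Hb HF.
  assert (Hs : 0 < s) by lra.
  assert (Hdiv : F / s <= (P + (s - a) / b * Q) / s).
  { apply Rmult_le_compat_r; [apply Rlt_le, Rinv_0_lt_compat |]; lra. }
  assert (Hsplit : (P + (s - a) / b * Q) / s = P / s + Q / b - a * Q / (b * s))
    by (field; lra).
  assert (HPs : P / s <= P / a).
  { apply Rmult_le_compat_l; [| apply Rinv_le_contravar]; lra. }
  assert (Hcorr : 0 <= a * Q / (b * s)).
  { apply Rmult_le_pos; [| apply Rlt_le, Rinv_0_lt_compat]; nra. }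
  lra.
Qed.

Lemma div_pow_le_of_order_bound (n : nat) (x y w u v : R) :
  0 < x -> 0 < y -> 0 <= u -> 0 <= v ->
  w <= u + ((x + y) ^ n - x ^ n) / y ^ n * v ->
  w / (x + y) ^ n <= u / x ^ n + v / y ^ n.
Proof.
  intros Hx Hy Hu Hv Hw.
  apply weighted_bound_div_le; auto using pow_lt.
  apply pow_incr; lra.
Qed.

Theorem theorem2p4 (I : R -> Prop) (n : nat) (Phi : R -> R) :
  is_interval I ->
  (forall t, I t -> 0 <= t) ->
  (exists a b, I a /\ I b /\ a <> b) ->
  (forall t, I t -> 0 <= Phi t) ->
  subadditive_of_order I n Phi ->
  forall x y, I x -> 0 < x -> I y -> 0 < y -> I (x + y) ->
    Phi (x + y) / (x + y) ^ n <= Phi x / x ^ n + Phi y / y ^ n.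
Proof.
  intros _ _ _ Phi_ge0 Phi_sub x y Ix Hx Iy Hy Ixy.
  apply div_pow_le_of_order_bound; [exact Hx | exact Hy | auto | auto |].
  now apply Phi_sub.
Qed.
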